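(* Let $G$ be a directed graph with $n$ nodes and $Z$ a zero forcing set of $G$ with $|Z|=m$. Let $\mathcal{C}$ be a set of node-disjoint chains covering $V(G)$ with set of sources $Z$ and $T$ a time function for $\mathcal{C}$ such that $G\in\mathcal{G}^{\mathcal{C},T}$. Then the edge set $E_{\mathrm{perf}}$ of $\mathcal{G}^{\mathcal{C},T}_{\mathrm{perf}}$ satisfies $|E_{\mathrm{perf}}|=\frac12 n(n+1)+\frac12 m(2n-m-1)$.
   Context: Graphs are directed, self-loops allowed. Zero forcing: with nodes colored black/white, a black node with exactly one white out-neighbor turns it black; $S$ is a zero forcing set if starting from black set $S$ and repeating this rule makes all nodes black. A chain is a directed path graph with source (start node) and sink (end node); for a non-sink $v$, $v+1$ is its out-neighbor. For node-disjoint chains $\mathcal{C}=\{C_1,\ldots,C_m\}$, $V=\bigcup_iV(C_i)$, $\gamma=|V|-m+1$, a time function is $T:V\to\{1,\ldots,\gamma\}$ with (1) $T(v)=1$ for every source; (2) distinct non-source nodes get distinct values; (3) $T(v)<T(v+1)$ for non-sink $v$. $T_{\max}(v)=\gamma$ for a sink $v$, else $T_{\max}(v)=T(v+1)-1$. $\mathcal{G}^{\mathcal{C},T}$ is the set of graphs $G$ with $V(G)=V$, $\bigcup_iE(C_i)\subseteq E(G)$, and $(u,v)\notin E(G)$ whenever $(u,v)\notin\bigcup_iE(C_i)$ and $T_{\max}(u)<T(v)$. $\mathcal{G}^{\mathcal{C},T}_{\mathrm{perf}}$ has node set $V$ and edge set $E_{\mathrm{perf}}=\bigcup_iE(C_i)\cup\{(u,v)\in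 V\times V: T_{\max}(u)\geq T(v)\}$. *)

From mathcomp Require Import all_boot.
Set Implicit Arguments. Unset Strict Implicit. Unset Printing Implicit Defensive.

(* Directed graphs on a finite node type V are edge relations E : rel V
   (self-loops allowed). *)

Section ZeroForcing.
Variable V : finType.
Variable E : rel V.

Inductive forces_to (S : {set V}) : {set V} -> Prop :=
| forces_base : forces_to S S
| forces_step (B : {set V}) (u w : V) :
    forces_to S B -> u \in B -> w \notin B -> E u w ->
    (forall x, E u x -> x \notin B -> x = w) ->
    forces_to S (w |: B).

Definition zero_forcing_set (S : {set V}) : Prop := forces_to S [set: V].
End ZeroForcing.

Section Chains.
Variable V : finType.
(* A family of chains is a list of node sequences; chain c = [v1; ...; vk]
   has edges (v_i, v_{i+1}), source v1 and sink vk. *)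
Variable C : seq (seq V).

Definition chain_edges : {set V * V} :=
  [set p | has (fun c => p \in zip c (behead c)) C].

Definition chain_cover : Prop :=
  all (fun c => c != [::]) C /\ uniq (flatten C) /\ (forall v : V, v \in flatten C).

Definition sources : {set V} :=
  [set v | has (fun c => (c != [::]) && (head v c == v)) C].

Definition is_source (v : V) : bool := v \in sources.

Definition gamma : nat := #|V| - size C + 1.

Definition time_function (T : V -> nat) : Prop :=
  (forall v, 1 <= T v <= gamma) /\
  (forall v, is_source v -> T v = 1) /\
  {in [pred v | ~~ is_source v] &, injective T} /\
  (forall u v, (u, v) \in chain_edges -> T u < T v).

Definition Tmax (T : V -> nat) (v : V) : nat :=
  match [pick w | (v, w) \in chain_edges] with
  | Some w => T w - 1
  | None => gamma
  end.

Definition in_graph_class (T : V -> nat) (E : rel V) : Prop :=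
  (forall u v, (u, v) \in chain_edges -> E u v) /\
  (forall u v, (u, v) \notin chain_edges -> Tmax T u < T v -> ~~ E u v).

Definition E_perf (T : V -> nat) : {set V * V} :=
  chain_edges :|: [set p | T p.2 <= Tmax T p.1].
End Chains.

From mathcomp Require Import all_boot zify.

(* E_perf splits into the n - m chain edges and the disjoint set of pairs
   (u, v) with T v <= Tmax u.  T sends the m sources to 1 and the other nodes
   bijectively onto 2 .. n - m + 1, so exactly m + k - 1 nodes have time at
   most k.  Tmax is n - m + 1 on the m sinks, while on the remaining nodes it
   is T (u + 1) - 1 and so runs through 1 .. n - m.  Summing m + Tmax u - 1
   over u counts n m + C(n - m, 2) + m (n - m) pairs. *)

Set Implicit Arguments. Unset Strict Implicit. Unset Printing Implicit Defensive.

Section ZipMembership.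
Variables S T : eqType.

Lemma mem_zip (s : seq S) (t : seq T) x y : (x, y) \in zip s t -> x \in s /\ y \in t.
Proof.
elim: s t => [|a s IH] [|b t] //=; rewrite in_cons => /orP [/eqP [-> ->]|/IH [xs yt]].
  by split; apply: mem_head.
by rewrite !in_cons xs yt !orbT.
Qed.

Lemma mem_zip_swap (s : seq S) (t : seq T) x y : ((y, x) \in zip t s) = ((x, y) \in zip s t).
Proof. by elim: s t => [|a s IH] [|b t] //=; rewrite !in_cons IH !xpair_eqE andbC. Qed.

Lemma zip_uniq_fst (s : seq S) (t : seq T) x y y' : uniq s ->
  (x, y) \in zip s t -> (x, y') \in zip s t -> y = y'.
Proof.
elim: s t => [|a s IH] [|b t] //= /andP [as_ /IH {}IH].
have notin_tail z : (a, z) \in zip s t = false by apply/negbTE; apply: contra as_ => /mem_zip [].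
rewrite !in_cons !xpair_eqE; case: (x =P a) => [->|_] /=; last exact: IH.
by rewrite !notin_tail !orbF => /eqP -> /eqP ->.
Qed.

End ZipMembership.

Lemma zip_uniq_snd (S T : eqType) (s : seq S) (t : seq T) x x' y : uniq t ->
  (x, y) \in zip s t -> (x', y) \in zip s t -> x = x'.
Proof. by rewrite -!(mem_zip_swap s t); apply: zip_uniq_fst. Qed.

Section Sequences.
Variable T : eqType.

Lemma zip_cons_pred (x v : T) s : v \in s -> exists u, (u, v) \in zip (x :: s) s.
Proof.
elim: s x => [|y s IH] x //; rewrite in_cons => /orP [/eqP ->|/(IH y) [u uv]].
  by exists x; rewrite inE eqxx.
by exists u; rewrite in_cons uv orbT.
Qed.

Lemma uniq_flatten_mem (ss : seq (seq T)) s : uniq (flatten ss) -> s \in ss -> uniq s.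
Proof.
elim: ss => [|s0 ss IH] //=; rewrite cat_uniq in_cons => /and3P [s0_uniq _ /IH {}IH].
by case/orP=> [/eqP ->|/IH].
Qed.

Lemma uniq_flatten_mem_eq (ss : seq (seq T)) s s' x : uniq (flatten ss) ->
  s \in ss -> s' \in ss -> x \in s -> x \in s' -> s = s'.
Proof.
elim: ss => [|s0 ss IH] //=; rewrite cat_uniq => /and3P [_ disj /IH {}IH].
have notin_rest s'' : s'' \in ss -> x \in s0 -> x \in s'' -> False.
  by move=> s''ss xs0 xs''; case/hasP: disj; exists x => //; apply/flattenP; exists s''.
rewrite !in_cons => /orP [/eqP ->|ss_s] /orP [/eqP ->|ss_s'] // xs xs'.
- by case: (notin_rest _ ss_s' xs xs').
- by case: (notin_rest _ ss_s xs' xs).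
- exact: IH.
Qed.

End Sequences.

Lemma mem_sourcesP (V : finType) (C : seq (seq V)) v :
  reflect (exists c, (v :: c) \in C) (v \in sources C).
Proof.
rewrite inE; apply: (iffP hasP) => [[[|x c] Cc /andP [//= _ /eqP <-]]|[c Cc]].
  by exists c.
by exists (v :: c); rewrite //= eqxx.
Qed.

Section Chains.
Variables (V : finType) (C : seq (seq V)).
Hypothesis coverC : chain_cover C.

Local Notation Ch := (chain_edges C).
Local Notation S := (sources C).

Lemma uniq_chain c : c \in C -> uniq c.
Proof. by case: coverC => _ [C_uniq _]; apply: uniq_flatten_mem. Qed.

Lemma mem_chain_eq c c' x : c \in C -> c' \in C -> x \in c -> x \in c' -> c = c'.
Proof. by case: coverC => _ [C_uniq _]; apply: uniq_flatten_mem_eq. Qed.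

Lemma chain_edge_succ_uniq u w w' : (u, w) \in Ch -> (u, w') \in Ch -> w = w'.
Proof.
rewrite !inE => /hasP [c Cc uw] /hasP [c' Cc' uw'].
have [[uc _] [uc' _]] := (mem_zip uw, mem_zip uw').
have c'c : c' = c by apply: (mem_chain_eq Cc' Cc uc' uc).
by rewrite c'c in uw'; apply: zip_uniq_fst uw uw'; apply: uniq_chain.
Qed.

Lemma chain_edge_pred_uniq u u' w : (u, w) \in Ch -> (u', w) \in Ch -> u = u'.
Proof.
rewrite !inE => /hasP [c Cc uw] /hasP [c' Cc' uw'].
have [[_ wc] [_ wc']] := (mem_zip uw, mem_zip uw').
have c'c : c' = c by apply: (mem_chain_eq Cc' Cc (mem_behead wc') (mem_behead wc)).
rewrite c'c in uw'; apply: zip_uniq_snd uw uw'.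
by rewrite -drop1; apply/drop_uniq/uniq_chain.
Qed.

Lemma chain_edge_notin_sources u w : (u, w) \in Ch -> w \notin S.
Proof.
rewrite inE => /hasP [c Cc uw]; apply/mem_sourcesP => -[c' Cc'].
have c_eq : c = w :: c'.
  by apply: (mem_chain_eq Cc Cc' _ (mem_head w c')); apply: mem_behead; case: (mem_zip uw).
move: (uniq_chain Cc'); rewrite c_eq /= in uw => /andP [/negP[]].
by case: (mem_zip uw).
Qed.

Lemma notin_sources_chain_edge v : v \notin S -> exists u, (u, v) \in Ch.
Proof.
case: coverC => C_ne [_ /(_ v) /flattenP [c Cc vc]] vS.
case: c Cc vc (allP C_ne _ Cc) => [|x c] // Cc; rewrite in_cons => /orP [/eqP vx|vc] _.
  by case/mem_sourcesP: vS; exists c; rewrite vx.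
by case: (zip_cons_pred x vc) => u uv; exists u; rewrite inE; apply/hasP; exists (x :: c).
Qed.

Lemma card_sources : #|S| = size C.
Proof.
case: coverC => + [+ _]; elim: C => [|c0 C' IH] /=.
  by move=> _ _; apply: eq_card0 => v; rewrite inE.
case: c0 => [|x c] //= /IH {}IH /andP []; rewrite mem_cat negb_or cat_uniq.
case/andP => _ xC' /and3P [_ _ /IH {}IH].
have -> : sources ((x :: c) :: C') = x |: sources C'.
  by apply/setP => v; rewrite !inE /= eq_sym.
rewrite cardsU1 IH; suff -> : x \notin sources C' by [].
apply/negP => /mem_sourcesP [d C'd]; case/negP: xC'.
by apply/flattenP; exists (x :: d); rewrite ?mem_head.
Qed.

Lemma chain_edge_fst_inj : {in Ch &, injective (fun p : V * V => p.1)}.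
Proof.
move=> [u w] [u' w'] /= uw + eq_u; rewrite -eq_u => uw'.
by rewrite (chain_edge_succ_uniq uw uw').
Qed.

Lemma chain_edge_snd_inj : {in Ch &, injective (fun p : V * V => p.2)}.
Proof.
move=> [u w] [u' w'] /= uw + eq_w; rewrite -eq_w => u'w.
by rewrite (chain_edge_pred_uniq uw u'w).
Qed.

Lemma chain_edge_targets : [set p.2 | p in Ch] = ~: S.
Proof.
apply/setP => v; rewrite inE; apply/imsetP/idP => [[[u w] uw ->]|vS].
  exact: chain_edge_notin_sources uw.
by case: (notin_sources_chain_edge vS) => u uv; exists (u, v).
Qed.

Lemma card_chain_edges : #|Ch| = #|V| - size C.
Proof.
rewrite -(card_in_imset chain_edge_snd_inj) chain_edge_targets.
by rewrite -card_sources -(cardsC S) addKn.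
Qed.

Lemma size_cover_leq_card : size C <= #|V|.
Proof. by rewrite -card_sources max_card. Qed.

Definition non_sinks : {set V} := [set p.1 | p in Ch].

Lemma card_non_sinks : #|non_sinks| = #|V| - size C.
Proof. by rewrite card_in_imset ?card_chain_edges //; apply: chain_edge_fst_inj. Qed.

End Chains.

Lemma sum_nat_leq m n k : m <= k.+1 <= n -> \sum_(m <= j < n) (j <= k) = k.+1 - m.
Proof.
case/andP=> mk kn; rewrite (big_cat_nat mk kn) /=.
rewrite big_nat_cond (eq_bigr (fun _ => 1)); last by move=> j /andP [/andP [_]]; rewrite ltnS => ->.
rewrite -big_nat_cond sum_nat_const_nat muln1 big_nat_cond big1 ?addn0 //.
by move=> j /andP [/andP [kj _] _]; rewrite leqNgt kj.
Qed.

Lemma card_set_pairs (V : finType) (F : rel V) :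
  #|[set p : V * V | F p.1 p.2]| = \sum_u #|[set v | F u v]|.
Proof.
under [RHS]eq_bigr => u _ do rewrite -sum1_card.
by rewrite pair_big_dep -sum1_card; apply: eq_bigl => -[u v]; rewrite !inE.
Qed.

Section TimeFunction.
Variables (V : finType) (C : seq (seq V)) (T : V -> nat).
Hypotheses (coverC : chain_cover C) (timeT : time_function C T).

Local Notation Ch := (chain_edges C).
Local Notation S := (sources C).
Local Notation L := (#|V| - size C).

Lemma time_bounds v : 0 < T v <= L.+1.
Proof. by case: timeT => /(_ v); rewrite /gamma addn1. Qed.

Lemma time_source v : v \in S -> T v = 1.
Proof. by case: timeT => _ [+ _]; apply. Qed.

Lemma time_notin_sources v : v \notin S -> 1 < T v.
Proof.
case/(notin_sources_chain_edge coverC) => u uv.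
case: timeT => _ [_ [_ /(_ u v uv)]]; apply: leq_trans.
by case/andP: (time_bounds u).
Qed.

Lemma perm_time_notin_sources : perm_eq [seq T v | v in ~: S] (index_iota 2 L.+2).
Proof.
have T_uniq : uniq [seq T v | v in ~: S].
  rewrite map_inj_in_uniq ?enum_uniq // => u v.
  rewrite !mem_enum !in_setC => uS vS; case: timeT => _ [_ [inj _]]; exact: inj uS vS.
have T_sub : {subset [seq T v | v in ~: S] <= index_iota 2 L.+2}.
  move=> j /imageP [v]; rewrite in_setC => vS ->.
  by rewrite mem_index_iota time_notin_sources //; case/andP: (time_bounds v).
have T_size : size (index_iota 2 L.+2) <= size [seq T v | v in ~: S].
  by rewrite size_iota size_map -cardE cardsCs setCK (card_sources coverC) -addn2 addnK.
have [_ T_eq] := uniq_min_size T_uniq T_sub T_size.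
by apply: uniq_perm; rewrite ?iota_uniq.
Qed.

Lemma sum_time_notin_sources F : \sum_(v in ~: S) F (T v) = \sum_(2 <= j < L.+2) F j.
Proof. by rewrite -big_image (perm_big _ perm_time_notin_sources). Qed.

Lemma card_time_leq k : 0 < k <= L.+1 -> #|[set v | T v <= k]| = size C + k.-1.
Proof.
move=> k_bounds; rewrite -sum1_card big_mkcond (bigID (mem S)) /=.
rewrite -(card_sources coverC) -sum1_card; congr (_ + _).
  by apply: eq_bigr => v vS; rewrite inE time_source //; case/andP: k_bounds => ->.
rewrite -subn1 -subSS -(@sum_nat_leq 2 L.+2) ?ltnS //.
rewrite -sum_time_notin_sources; apply: eq_big => [v | v _]; first by rewrite in_setC.
by rewrite inE; case: (T v <= k).
Qed.

Lemma Tmax_chain_edge u w : (u, w) \in Ch -> Tmax C T u = T w - 1.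
Proof.
rewrite /Tmax => uw; case: pickP => [w' uw'|/(_ w)]; last by rewrite uw.
by rewrite (chain_edge_succ_uniq coverC uw' uw).
Qed.

Lemma Tmax_sink u : u \notin non_sinks C -> Tmax C T u = L.+1.
Proof.
rewrite /Tmax /gamma addn1 => u_sink; case: pickP => // w uw.
by case/imsetP: u_sink; exists (u, w).
Qed.

Lemma Tmax_bounds u : 0 < Tmax C T u <= L.+1.
Proof.
case: (boolP (u \in non_sinks C)) => [/imsetP [[u' w] uw ->]|/Tmax_sink ->]; last by rewrite /=.
have := time_notin_sources (chain_edge_notin_sources coverC uw).
rewrite (Tmax_chain_edge uw); case/andP: (time_bounds w); lia.
Qed.

Lemma sum_Tmax : \sum_u (Tmax C T u - 1) = 'C(L, 2) + size C * L.
Proof.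
rewrite (bigID (mem (non_sinks C))) /=; congr (_ + _).
  rewrite big_imset /=; last exact: chain_edge_fst_inj coverC.
  rewrite (eq_bigr (fun p => T p.2 - 2)); last first.
    by move=> [u w] uw; rewrite (Tmax_chain_edge uw) -subnDA.
  rewrite -(big_imset (fun v => T v - 2) (chain_edge_snd_inj coverC)) /=.
  rewrite (chain_edge_targets coverC) (sum_time_notin_sources (subn^~ 2)).
  rewrite -{1}[2]add0n big_addn.
  rewrite !subSS subn0 -bin2_sum; apply: eq_bigr => j _; exact: addnK.
rewrite (eq_bigr (fun _ => L)) => [|u /Tmax_sink ->]; last exact: subn1.
rewrite (eq_bigl (fun u => u \in ~: non_sinks C)) => [|u]; last by rewrite in_setC.
by rewrite sum_nat_const cardsCs setCK (card_non_sinks coverC) subKn ?size_cover_leq_card.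
Qed.

Lemma card_perf_pairs :
  #|[set p : V * V | T p.2 <= Tmax C T p.1]| = #|V| * size C + ('C(L, 2) + size C * L).
Proof.
rewrite (card_set_pairs (fun u v => T v <= Tmax C T u)) -sum_Tmax -sum_nat_const.
rewrite -big_split /=; apply: eq_bigr => u _.
by rewrite (card_time_leq (Tmax_bounds u)) subn1.
Qed.

Lemma card_E_perf : #|E_perf C T| = L + (#|V| * size C + ('C(L, 2) + size C * L)).
Proof.
rewrite cardsU (card_chain_edges coverC) card_perf_pairs.
suff -> : Ch :&: [set p | T p.2 <= Tmax C T p.1] = set0 by rewrite cards0 subn0.
apply/setP => -[u w]; rewrite in_setI in_set0; apply/negbTE/andP => -[uw].
case/andP: (time_bounds w) => w_gt0 _.
by rewrite inE (Tmax_chain_edge uw) leqNgt ltn_subrL w_gt0.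
Qed.

End TimeFunction.

Lemma perf_count_closed_form m n : m <= n ->
  (n - m) + (n * m + ('C(n - m, 2) + m * (n - m))) =
  n * (n + 1) %/ 2 + m * (2 * n - m - 1) %/ 2.
Proof.
move=> le_mn.
have twice_bin2 k : 2 * 'C(k, 2) = k * k.-1 by rewrite -mul_bin_diag bin1.
have -> : n * (n + 1) = 2 * 'C(n.+1, 2) by rewrite twice_bin2 mulnC addn1.
have -> : m * (2 * n - m - 1) = 2 * ('C(m, 2) + m * (n - m)).
  by rewrite mulnDr twice_bin2; nia.
rewrite !mulKn //.
have := twice_bin2 (n - m); have := twice_bin2 m; have := twice_bin2 n.+1; nia.
Qed.

Unset Implicit Arguments.

Theorem lemma2 (V : finType) (E : rel V) (Z : {set V})
  (C : seq (seq V)) (T : V -> nat) :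
  zero_forcing_set E Z ->
  chain_cover C ->
  sources C = Z ->
  time_function C T ->
  in_graph_class C T E ->
  #|E_perf C T| = (#|V| * (#|V| + 1)) %/ 2 + (#|Z| * (2 * #|V| - #|Z| - 1)) %/ 2.
Proof.
move=> _ coverC sourcesZ timeT _.
rewrite -sourcesZ (card_sources coverC) (card_E_perf coverC timeT).
by rewrite perf_count_closed_form // (size_cover_leq_card coverC).
Qed.
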